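(* Let $(H,\cdot,1,\Delta,\varepsilon,\rhd)$ be a right Post-Hopf algebra which is connected as a coalgebra, with coradical filtration $(H^{\leq n})_{n\in\mathbb{N}}$. Then for every $n\in\mathbb{N}$, $H^{\leq n}\rhd H\subseteq H^{\leq n}$.
   Context: With $\rho(x)=x-\varepsilon(x)1$, $\tilde\Delta(x)=\Delta(x)-1\otimes x-x\otimes 1$ on $\ker\varepsilon$, $\tilde\Delta(1)=0$, $\tilde\Delta^{(0)}=\rho$, $\tilde\Delta^{(1)}=\tilde\Delta$, $\tilde\Delta^{(k)}=(\tilde\Delta\otimes\mathrm{Id}^{\otimes k-1})\circ\tilde\Delta^{(k-1)}$: $H$ is connected as a coalgebra if every $x$ satisfies $\tilde\Delta^{(n)}(x)=0$ for some $n$, and $H^{\leq n}=\{x\in H:\tilde\Delta^{(n)}(x)=0\}$. A right Post-Hopf algebra is a Hopf algebra $(H,\cdot,1,\Delta,\varepsilon)$ with a coalgebra morphism $\rhd:H\otimes H\to H$ such that $(x\cdot y)\rhd z=(x\rhd z^{(1)})\cdot(y\rhd z^{(2)})$, $(x\rhd y)\rhd z=x\rhd\big((y\rhd z^{(1)})\cdot z^{(2)}\big)$ (Sweedler notation), and $\gamma_\rhd(x)(y)=y\rhd x$ is invertible in the convolution algebra $\mathrm{Hom}(H,\mathrm{End}(H))$ with product $(f\star g)(x)=f(x^{(1)})\circ g(x^{(2)})$. *)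

(* Hopf algebras over a field k, with tensor products
   represented by finite formal sums of pure tensors; equality in the
   tensor power H^{(x)m} is defined by the universal property: two formal
   sums are equal iff every m-multilinear map into every k-vector space
   takes the same value on them. *)
From HB Require Import structures.
From mathcomp Require Import all_boot all_order all_algebra.
Set Implicit Arguments. Unset Strict Implicit. Unset Printing Implicit Defensive.
Import GRing.Theory.
Local Open Scope ring_scope.

Section Hopf.
Variables (k : fieldType) (H : algType k).

Definition multilinear (m : nat) (W : lmodType k) (f : seq H -> W) : Prop :=
  forall (l r : seq H) (a : k) (x y : H), (size l + size r).+1 = m ->
    f (l ++ (a *: x + y) :: r) = a *: f (l ++ x :: r) + f (l ++ y :: r).

Definition teq (m : nat) (s t : seq (seq H)) : Prop :=
  forall (W : lmodType k) (f : seq H -> W), multilinear m f ->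
    \sum_(u <- s) f u = \sum_(u <- t) f u.

Definition pairs2 (s : seq (H * H)) : seq (seq H) :=
  [seq [:: p.1; p.2] | p <- s].

Variables (Delta : H -> seq (H * H)) (eps : H -> k).

Record is_hopf : Prop := IsHopf {
  eps_linear : forall (a : k) (x y : H), eps (a *: x + y) = a * eps x + eps y;
  Delta_linear : forall (a : k) (x y : H),
    teq 2 (pairs2 (Delta (a *: x + y)))
          (pairs2 ([seq (a *: p.1, p.2) | p <- Delta x] ++ Delta y));
  coassoc : forall x : H,
    teq 3 (flatten [seq [seq [:: q.1; q.2; p.2] | q <- Delta p.1] | p <- Delta x])
          (flatten [seq [seq [:: p.1; q.1; q.2] | q <- Delta p.2] | p <- Delta x]);
  counit_l : forall x : H, \sum_(p <- Delta x) eps p.1 *: p.2 = x;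
  counit_r : forall x : H, \sum_(p <- Delta x) eps p.2 *: p.1 = x;
  Delta_mul : forall x y : H,
    teq 2 (pairs2 (Delta (x * y)))
          (pairs2 [seq (p.1 * q.1, p.2 * q.2) | p <- Delta x, q <- Delta y]);
  Delta_one : teq 2 (pairs2 (Delta 1)) [:: [:: 1; 1]];
  eps_mul : forall x y : H, eps (x * y) = eps x * eps y;
  eps_one : eps 1 = 1;
  antipode : exists S : H -> H,
    (forall (a : k) (x y : H), S (a *: x + y) = a *: S x + S y) /\
    (forall x : H, \sum_(p <- Delta x) S p.1 * p.2 = eps x *: 1) /\
    (forall x : H, \sum_(p <- Delta x) p.1 * S p.2 = eps x *: 1)
}.

Record is_right_post_hopf (tr : H -> H -> H) : Prop := IsRPH {
  tr_linear_l : forall (a : k) (x x' y : H), tr (a *: x + x') y = a *: tr x y + tr x' y;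
  tr_linear_r : forall (a : k) (x y y' : H), tr x (a *: y + y') = a *: tr x y + tr x y';
  (* coalgebra morphism H (x) H -> H, with Delta(x(x)y) = (x1(x)y1)(x)(x2(x)y2) *)
  tr_Delta : forall x y : H,
    teq 2 (pairs2 (Delta (tr x y)))
          (pairs2 [seq (tr p.1 q.1, tr p.2 q.2) | p <- Delta x, q <- Delta y]);
  tr_eps : forall x y : H, eps (tr x y) = eps x * eps y;
  tr_mul : forall x y z : H,
    tr (x * y) z = \sum_(p <- Delta z) tr x p.1 * tr y p.2;
  tr_tr : forall x y z : H,
    tr (tr x y) z = tr x (\sum_(p <- Delta z) tr y p.1 * p.2);
  (* gamma(x)(y) = y |> x is convolution-invertible in Hom(H, End(H)),
     whose unit is x |-> eps(x) id *)
  tr_gamma_inv : exists g : H -> H -> H,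
    (forall (a : k) (x x' y : H), g (a *: x + x') y = a *: g x y + g x' y) /\
    (forall (a : k) (x y y' : H), g x (a *: y + y') = a *: g x y + g x y') /\
    (forall x y : H, \sum_(p <- Delta x) tr (g p.2 y) p.1 = eps x *: y) /\
    (forall x y : H, \sum_(p <- Delta x) g p.1 (tr y p.2) = eps x *: y)
}.

Definition rho (x : H) : H := x - eps x *: 1.

(* reduced coproduct on all of H: the linear extension of
   x |-> Delta x - 1(x)x - x(x)1 on ker eps with 1 |-> 0, i.e.
   Delta~(x) = Delta(rho x) - 1 (x) rho x - rho x (x) 1 *)
Definition rDelta (x : H) : seq (H * H) :=
  Delta (rho x) ++ [:: (- 1, rho x); (- rho x, 1)].

(* one step of (Delta~ (x) Id^{(x) k}) on formal sums *)
Definition rstep (s : seq (seq H)) : seq (seq H) :=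
  flatten [seq [seq [:: p.1, p.2 & behead u] | p <- rDelta (head 0 u)] | u <- s].

Fixpoint rDelta_pos (n : nat) (x : H) : seq (seq H) :=
  match n with
  | 0 => pairs2 (rDelta x)
  | n'.+1 => rstep (rDelta_pos n' x)
  end.

(* Delta~^{(n)}, an element of H^{(x)(n+1)} *)
Definition rDelta_iter (n : nat) (x : H) : seq (seq H) :=
  match n with
  | 0 => [:: [:: rho x]]
  | n'.+1 => rDelta_pos n' x
  end.

Definition coradical_filt (n : nat) (x : H) : Prop :=
  teq n.+1 (rDelta_iter n x) [::].

Definition connected_coalg : Prop := forall x : H, exists n, coradical_filt n x.

End Hopf.

(** With [phi := tr 1], the first Post-Hopf axiom gives [phi = phi * phi] for
    the convolution product, and since [phi] is a coalgebra morphism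
    [S \o phi] is a left convolution inverse of it; hence [phi = eps 1].
    Consequently [rho] commutes with [tr _ y], and the coalgebra-morphism
    axiom turns into [Delta~ (x |> y) = Delta~ x |> Delta y].  Iterating,
    [Delta~^(n) (x |> y)] is the componentwise action of [Delta~^(n) x] on
    [Delta^(n) y], which vanishes as soon as [Delta~^(n) x] does. *)
From Pilot Require Import Defs.
From mathcomp Require Import all_boot all_order all_algebra zify.
Set Implicit Arguments. Unset Strict Implicit. Unset Printing Implicit Defensive.
Import GRing.Theory.
Local Open Scope ring_scope.

Section Multilinear.
Variables (k : fieldType) (H : algType k).

Definition klinear (W : lmodType k) (g : H -> W) :=
  forall (a : k) (x y : H), g (a *: x + y) = a *: g x + g y.

Definition kbilinear (W : lmodType k) (h : H -> H -> W) :=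
  (forall z, klinear (h^~ z)) /\ (forall z, klinear (h z)).

Definition ktrilinear (W : lmodType k) (h : H -> H -> H -> W) :=
  [/\ forall y z, klinear (fun x => h x y z), forall x z, klinear (fun y => h x y z)
    & forall x y, klinear (h x y)].

Variables (W : lmodType k) (g : H -> W).
Hypothesis g_lin : klinear g.

Lemma klinear0 : g 0 = 0.
Proof.
have := g_lin 1 0 0; rewrite !scale1r addr0 => e.
by apply: (@addrI _ (g 0)); rewrite addr0 -e.
Qed.

Lemma klinearD x y : g (x + y) = g x + g y.
Proof. by rewrite -{1}[x]scale1r g_lin scale1r. Qed.

Lemma klinearZ a x : g (a *: x) = a *: g x.
Proof. by rewrite -[a *: x]addr0 g_lin klinear0 addr0. Qed.

Lemma klinearN x : g (- x) = - g x.
Proof. by rewrite -(scaleN1r x) klinearZ scaleN1r. Qed.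

Lemma klinear_sum I (r : seq I) (F : I -> H) :
  g (\sum_(i <- r) F i) = \sum_(i <- r) g (F i).
Proof.
elim: r => [|i r IH]; first by rewrite !big_nil klinear0.
by rewrite !big_cons klinearD IH.
Qed.

End Multilinear.

Lemma klinear_sumf (k : fieldType) (H : algType k) (W : lmodType k) I
    (r : seq I) (G : I -> H -> W) :
  (forall i, klinear (G i)) -> klinear (fun x => \sum_(i <- r) G i x).
Proof.
move=> G_lin a x y; rewrite scaler_sumr -big_split /=.
by apply: eq_bigr => i _; rewrite G_lin.
Qed.

Section Tensors.
Variables (k : fieldType) (H : algType k) (W : lmodType k).

Lemma multilinear2_bilinear (h : H -> H -> W) : kbilinear h ->
  multilinear 2 (fun w : seq H => h (nth 0 w 0) (nth 0 w 1)).
Proof.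
move=> [h1 h2] [|b [|c l]] r a x y //= Hs.
- by case: r Hs => [|d [|e r]] //= _; apply: h1.
- by case: r Hs => [|d r] //= _; apply: h2.
Qed.

Lemma multilinear3_trilinear (h : H -> H -> H -> W) : ktrilinear h ->
  multilinear 3 (fun w : seq H => h (nth 0 w 0) (nth 0 w 1) (nth 0 w 2)).
Proof.
move=> [h1 h2 h3] [|b [|c [|d l]]] r a x y //= Hs.
- by case: r Hs => [|e [|f [|g r]]] //= _; apply: h1.
- by case: r Hs => [|e [|f r]] //= _; apply: h2.
- by case: r Hs => [|e r] //= _; apply: h3.
Qed.

Lemma teq2_bilinear (s t : seq (H * H)) (h : H -> H -> W) :
  teq 2 (pairs2 s) (pairs2 t) -> kbilinear h ->
  \sum_(p <- s) h p.1 p.2 = \sum_(p <- t) h p.1 p.2.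
Proof. by move=> st hb; have := st W _ (multilinear2_bilinear hb); rewrite !big_map. Qed.

Lemma multilinear_bilinear_head n (f : seq H -> W) r :
  multilinear n.+2 f -> size r = n -> kbilinear (fun x y => f [:: x, y & r]).
Proof.
move=> f_ml r_n; split=> z a x y.
- by apply: (f_ml [::] (z :: r)); rewrite /= r_n.
- by apply: (f_ml [:: z] r); rewrite /= r_n.
Qed.

End Tensors.

Section PostHopf.
Variables (k : fieldType) (H : algType k).
Variables (Delta : H -> seq (H * H)) (eps : H -> k) (tr : H -> H -> H).
Hypothesis hH : is_hopf Delta eps.
Hypothesis hT : is_right_post_hopf Delta eps tr.

Local Notation rho := (rho eps).
Local Notation rDelta := (rDelta Delta eps).
Local Notation rDelta_iter := (rDelta_iter Delta eps).
Local Notation rstep := (rstep Delta eps).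

Lemma trlinear_l z : klinear (tr^~ z).
Proof. by move=> a x y; apply: (tr_linear_l hT). Qed.

Lemma trlinear_r x : klinear (tr x).
Proof. by move=> a y y'; apply: (tr_linear_r hT). Qed.

Lemma tr1_conv_idem w : tr 1 w = \sum_(p <- Delta w) tr 1 p.1 * tr 1 p.2.
Proof. by rewrite -(tr_mul hT) mulr1. Qed.

Lemma antipode_tr1_conv (S : H -> H) : klinear S ->
    (forall x, \sum_(p <- Delta x) S p.1 * p.2 = eps x *: 1) ->
  forall w, \sum_(q <- Delta w) S (tr 1 q.1) * tr 1 q.2 = eps w *: 1.
Proof.
move=> S_lin S_antipode w.
have -> : eps w = eps (tr 1 w) by rewrite (tr_eps hT) (eps_one hH) mul1r.
have S_bil : kbilinear (fun a b : H => S a * b).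
  split=> c a x y; first by rewrite S_lin mulrDl scalerAl.
  by rewrite mulrDr scalerAr.
have S_tr_bil : kbilinear (fun a b : H => \sum_(q <- Delta w) S (tr a q.1) * tr b q.2).
  split=> c; apply: klinear_sumf => q a x y /=.
    by rewrite trlinear_l S_lin mulrDl scalerAl.
  by rewrite trlinear_l mulrDr scalerAr.
rewrite -S_antipode (teq2_bilinear (tr_Delta hT 1 w) S_bil) big_allpairs_dep.
by rewrite (teq2_bilinear (Delta_one hH : teq 2 _ (pairs2 [:: (1, 1)])) S_tr_bil) big_seq1.
Qed.

Lemma tr1l z : tr 1 z = eps z *: 1.
Proof.
have [S [S_lin [S_antipode _]]] := antipode hH.
have convS := antipode_tr1_conv (fun a x y => S_lin a x y) S_antipode.
have phi3 : ktrilinear (fun a b c => S (tr 1 a) * tr 1 b * tr 1 c).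
  split=> ? ? ? ? ? /=.
  - by rewrite trlinear_r S_lin mulrDl mulrDl !scalerAl.
  - by rewrite trlinear_r mulrDr mulrDl -scalerAr -scalerAl.
  - by rewrite trlinear_r mulrDr -scalerAr.
have := coassoc hH z (multilinear3_trilinear phi3); rewrite !big_allpairs_dep /=.
(* [(S phi * phi) * phi = S phi * (phi * phi)]; the left side is [phi], the right side [eps 1]. *)
move=> coassoc_z; rewrite -{1}(counit_l hH z) (klinear_sum (trlinear_r 1)).
transitivity (\sum_(p <- Delta z)
    \sum_(q <- Delta p.1) S (tr 1 q.1) * tr 1 q.2 * tr 1 p.2).
  apply: eq_bigr => p _.
  by rewrite (klinearZ (trlinear_r 1)) -{1}[tr 1 p.2]mul1r scalerAl -convS mulr_suml.
rewrite coassoc_z -convS; apply: eq_bigr => p _.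
by rewrite (tr1_conv_idem p.2) mulr_sumr; apply: eq_bigr => q _; rewrite mulrA.
Qed.

Lemma eps_rho x : eps (rho x) = 0.
Proof. by rewrite /Defs.rho -scaleNr addrC (eps_linear hH) (eps_one hH) mulr1 addNr. Qed.

Lemma rho_idem x : rho (rho x) = rho x.
Proof. by rewrite [LHS]/Defs.rho eps_rho scale0r subr0. Qed.

Lemma rho_linear : klinear rho.
Proof.
move=> a x y; rewrite /Defs.rho (eps_linear hH) scalerBr scalerA scalerDl opprD.
by rewrite addrACA.
Qed.

Lemma rho_tr x y : rho (tr x y) = tr (rho x) y.
Proof.
rewrite /Defs.rho (tr_eps hT) (klinearD (trlinear_l y)) (klinearN (trlinear_l y)).
by rewrite (klinearZ (trlinear_l y)) tr1l scalerA.
Qed.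

Lemma big_rDelta (W : lmodType k) (F : H * H -> W) z :
  \sum_(p <- rDelta z) F p =
  \sum_(p <- Delta (rho z)) F p + F (- 1, rho z) + F (- rho z, 1).
Proof. by rewrite big_cat /= !big_cons big_nil addr0 addrA. Qed.

Lemma rDelta_linear (W : lmodType k) (h : H -> H -> W) a x y : kbilinear h ->
  \sum_(p <- rDelta (a *: x + y)) h p.1 p.2 =
  a *: \sum_(p <- rDelta x) h p.1 p.2 + \sum_(p <- rDelta y) h p.1 p.2.
Proof.
move=> [h1 h2]; rewrite !big_rDelta rho_linear.
rewrite (teq2_bilinear (Delta_linear hH _ _ _) (conj h1 h2)) big_cat big_map /=.
rewrite h2 opprD -scalerN h1 /=.
under eq_bigr => p _ do rewrite (klinearZ (h1 p.2)).
rewrite -scaler_sumr !scalerDr [X in X + _ = _]addrACA.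
exact: addrACA.
Qed.

Lemma rDelta_tr (W : lmodType k) (h : H -> H -> W) a b : kbilinear h ->
  \sum_(p <- rDelta (tr a b)) h p.1 p.2 =
  \sum_(p <- rDelta a) \sum_(q <- Delta b) h (tr p.1 q.1) (tr p.2 q.2).
Proof.
move=> [h1 h2]; rewrite !big_rDelta rho_tr.
rewrite (teq2_bilinear (tr_Delta hT _ _) (conj h1 h2)) big_allpairs_dep /=.
congr (_ + _ + _).
- rewrite -{1}(counit_l hH b) (klinear_sum (trlinear_r _)).
  rewrite (klinear_sum (h2 _)); apply: eq_bigr => q _.
  rewrite (klinearN (trlinear_l _)) tr1l -scalerN (klinearZ (h1 _)).
  by rewrite (klinearZ (trlinear_r _)) (klinearZ (h2 _)).
- rewrite -(klinearN (trlinear_l _)) -{1}(counit_r hH b).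
  rewrite (klinear_sum (trlinear_r _)) (klinear_sum (h1 _)); apply: eq_bigr => q _.
  by rewrite tr1l (klinearZ (h2 _)) (klinearZ (trlinear_r _)) (klinearZ (h1 _)).
Qed.

Lemma rDelta_iterS n x : rDelta_iter n.+1 x = rstep (rDelta_iter n x).
Proof. by case: n => [|n] //=; rewrite /Defs.rstep /= cats0 {2}/Defs.rDelta rho_idem. Qed.

Lemma size_rDelta_iter n x u : u \in rDelta_iter n x -> size u = n.+1.
Proof.
elim: n u => [|n IH] u; first by rewrite /= inE => /eqP ->.
rewrite rDelta_iterS => /flatten_mapP [w /IH w_n /mapP [p _ ->]] /=.
by rewrite size_behead w_n.
Qed.

Definition comp_rstep (W : lmodType k) (f : seq H -> W) (u : seq H) :=
  \sum_(p <- rDelta (head 0 u)) f [:: p.1, p.2 & behead u].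

Lemma big_rstep (W : lmodType k) (f : seq H -> W) s :
  \sum_(u <- rstep s) f u = \sum_(u <- s) comp_rstep f u.
Proof. exact: big_allpairs_dep. Qed.

Lemma multilinear_comp_rstep n (W : lmodType k) (f : seq H -> W) :
  multilinear n.+2 f -> multilinear n.+1 (comp_rstep f).
Proof.
move=> f_ml [|c l] r a x z /= r_n.
- apply: (rDelta_linear (h := fun p1 p2 => f [:: p1, p2 & r])).
  by apply: (multilinear_bilinear_head f_ml); case: r_n.
- rewrite scaler_sumr -big_split /=; apply: eq_bigr => p _.
  by apply: (f_ml [:: p.1, p.2 & l] r); move: r_n => /=; lia.
Qed.

Fixpoint Delta_iter (n : nat) (y : H) : seq (seq H) :=
  if n is n'.+1 then
    flatten [seq [seq [:: q.1, q.2 & behead v] | q <- Delta (head 0 v)]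
            | v <- Delta_iter n' y]
  else [:: [:: y]].

Lemma size_Delta_iter n y v : v \in Delta_iter n y -> size v = n.+1.
Proof.
elim: n v => [|n IH] v /=; first by rewrite inE => /eqP ->.
by case/flatten_mapP => w /IH w_n /mapP [q _ ->] /=; rewrite size_behead w_n.
Qed.

Definition tr_tensor (u v : seq H) : seq H := [seq tr p.1 p.2 | p <- zip u v].

Definition comp_trDelta n y (W : lmodType k) (f : seq H -> W) (u : seq H) :=
  \sum_(v <- Delta_iter n y) f (tr_tensor u v).

Lemma multilinear_comp_trDelta n y (W : lmodType k) (f : seq H -> W) :
  multilinear n.+1 f -> multilinear n.+1 (comp_trDelta n y f).
Proof.
move=> f_ml l r a x z lr_n; rewrite /comp_trDelta scaler_sumr -big_split /=.
apply: eq_big_seq => v /size_Delta_iter v_n.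
have l_v : (size l < size v)%N by rewrite v_n -lr_n ltnS leq_addr.
have drop_n : size (drop (size l) v) = (size r).+1 by rewrite size_drop v_n -lr_n; lia.
rewrite -(cat_take_drop (size l) v).
case E: (drop (size l) v) drop_n => [|b v2] //= [v2_n].
have take_n : size l = size (take (size l) v) by rewrite size_take l_v.
rewrite /tr_tensor !zip_cat // !map_cat /= (trlinear_l b) f_ml //.
by rewrite !size_map !size_zip -take_n v2_n !minnn.
Qed.

(* Tested against [n+1]-multilinear maps, this is the tensor identity
   [Delta~^(n) (x |> y) = Delta~^(n) x |> Delta^(n) y]. *)
Lemma big_rDelta_iter_tr n x y (W : lmodType k) (f : seq H -> W) :
  multilinear n.+1 f ->
  \sum_(u <- rDelta_iter n (tr x y)) f u =
  \sum_(u <- rDelta_iter n x) comp_trDelta n y f u.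
Proof.
elim: n W f => [|n IH] W f f_ml.
  by rewrite /= !big_seq1 /comp_trDelta /= big_seq1 /tr_tensor /= rho_tr.
rewrite !rDelta_iterS !big_rstep (IH _ _ (multilinear_comp_rstep f_ml)).
apply: eq_big_seq => -[|c u] /size_rDelta_iter //= [u_n].
rewrite /comp_rstep /comp_trDelta /=.
under [in RHS]eq_bigr do rewrite big_allpairs_dep /=.
rewrite exchange_big /=; apply: eq_big_seq => -[|b v] /size_Delta_iter //= [v_n].
apply: (rDelta_tr (h := fun p1 p2 => f [:: p1, p2 & tr_tensor u v])).
by apply: (multilinear_bilinear_head f_ml); rewrite size_map size_zip u_n v_n minnn.
Qed.

End PostHopf.

Theorem lemma3p3 (k : fieldType) (H : algType k)
  (Delta : H -> seq (H * H)) (eps : H -> k) (tr : H -> H -> H) :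
  is_hopf Delta eps ->
  is_right_post_hopf Delta eps tr ->
  connected_coalg Delta eps ->
  forall (n : nat) (x y : H),
    coradical_filt Delta eps n x -> coradical_filt Delta eps n (tr x y).
Proof.
move=> hH hT _ n x y x_n W f f_ml.
rewrite (big_rDelta_iter_tr hH hT x y f_ml) big_nil.
by have := x_n W _ (multilinear_comp_trDelta hT y f_ml); rewrite big_nil.
Qed.
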